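(* Suppose $\eta_jL<1$. For the biased batched SVRG (Algorithm 3), $$(1-\lambda)\big(1-(1-\lambda)L\eta_j\big)\eta_jB_j\,\mathbb{E}\|\nabla f(\tilde x_j)\|^2+\eta_jB_j\,\mathbb{E}\langle e_j,\nabla f(\tilde x_j)\rangle\le b_j\,\mathbb{E}\big(f(\tilde x_{j-1})-f(\tilde x_j)\big)+\frac{(1-\lambda)^2\eta_j^2B_jL^3}{2b_j}\mathbb{E}\|\tilde x_j-\tilde x_{j-1}\|^2+L\eta_j^2B_j\,\mathbb{E}\|e_j\|^2.$$
   Context: Setting: $f(x)=\frac1n\sum_{i=1}^n f_i(x)$ with each $f_i:\mathbb{R}^d\to\mathbb{R}$ differentiable and $L$-smooth: $\|\nabla f_i(x)-\nabla f_i(y)\|\le L\|x-y\|$. For $\mathcal I\subset\{1,\dots,n\}$, $\nabla f_{\mathcal I}(x)=\frac1{|\mathcal I|}\sum_{i\in\mathcal I}\nabla f_i(x)$. $N\sim\mathrm{Geom}(\gamma')$ means $P(N=k)=(1-\gamma')\gamma'^k$, $k\ge0$. Epoch $j$ of the batched SVRG scheme: $\mathcal I_j$ uniformly random of size $B_j$, $g_j=\nabla f_{\mathcal I_j}(\tilde x_{j-1})$, $x^{(j)}_0=\tilde x_{j-1}$; $N_j\sim\mathrm{Geom}(B_j/(B_j+b_j))$ drawn independently (mean $B_j/b_j$); for $k=0,\dots,N_j-1$, $\tilde{\mathcal I}_k$ uniformly random of size $b_j$ and $x^{(j)}_{k+1}=x^{(j)}_k-\eta_jv^{(j)}_k$;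 $\tilde x_j=x^{(j)}_{N_j}$. Algorithm 3 (biased, $0<\lambda<1$): $v^{(j)}_k=(1-\lambda)(\nabla f_{\tilde{\mathcal I}_k}(x^{(j)}_k)-\nabla f_{\tilde{\mathcal I}_k}(x^{(j)}_0))+\lambda g_j$, and $e_j=\lambda\nabla f_{\mathcal I_j}(\tilde x_{j-1})-(1-\lambda)\nabla f(\tilde x_{j-1})$. $\mathbb{E}$ is expectation over all randomness. *)

From HB Require Import structures.
From mathcomp Require Import all_boot all_order all_algebra.
From mathcomp Require Import all_classical all_reals all_analysis.
Set Implicit Arguments. Unset Strict Implicit. Unset Printing Implicit Defensive.
Import Order.TTheory GRing.Theory Num.Theory.
Import numFieldNormedType.Exports.
Local Open Scope ring_scope.

Section SVRG.
Variables (R : realType) (n d : nat).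
Notation V := 'rV[R]_d.

(* Euclidean inner product and norms on R^d (the built-in matrix norm is
   the max norm, so we use our own Euclidean ones). *)
Definition dotv (u v : V) : R := (u *m v^T) 0 0.
Definition enorm2 (u : V) : R := dotv u u.
Definition enorm (u : V) : R := Num.sqrt (dotv u u).

Definition favg (f : 'I_n -> V -> R) (x : V) : R := n%:R^-1 * \sum_(i < n) f i x.
Definition gradI (g : 'I_n -> V -> V) (I : {set 'I_n}) (x : V) : V :=
  #|I|%:R^-1 *: \sum_(i in I) g i x.
Definition gradf (g : 'I_n -> V -> V) (x : V) : V := gradI g [set: 'I_n] x.

Definition is_gradient (f : 'I_n -> V -> R) (g : 'I_n -> V -> V) :=
  forall i x, differentiable (f i) x /\ forall h, 'd (f i) x h = dotv (g i x) h.
Definition Lsmooth (g : 'I_n -> V -> V) (L : R) :=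
  forall i x y, enorm (g i x - g i y) <= L * enorm (x - y).

(* Inner loop of epoch j of Algorithm 3, started at x0 = tilde x_{j-1}, with
   gI = g_j = grad f_{I_j}(x0) and inner minibatches s 0, s 1, ... :
   x_{k+1} = x_k - eta * ((1-lam)(grad f_{s k}(x_k) - grad f_{s k}(x0)) + lam gI). *)
Fixpoint svrg_iter (g : 'I_n -> V -> V) (lam eta : R) (x0 gI : V)
    (s : nat -> {set 'I_n}) (k : nat) : V :=
  match k with
  | 0 => x0
  | k'.+1 =>
      let x := svrg_iter g lam eta x0 gI s k' in
      x - eta *: ((1 - lam) *: (gradI g (s k') x - gradI g (s k') x0) + lam *: gI)
  end.

Definition avg (T : finType) (A : {set T}) (F : T -> R) : R :=
  #|A|%:R^-1 * \sum_(x in A) F x.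

Definition subsets (m : nat) : {set {set 'I_n}} := [set S : {set 'I_n} | #|S| == m].
Definition batches (m k : nat) : {set {ffun 'I_k -> {set 'I_n}}} :=
  [set F : {ffun 'I_k -> {set 'I_n}} | [forall i, #|F i| == m]].
Definition ext_batches (k : nat) (F : {ffun 'I_k -> {set 'I_n}}) : nat -> {set 'I_n} :=
  fun i => if insub i is Some j then F j else (finset.set0 : {set 'I_n}).

(* P(N = k) for N ~ Geom(B/(B+b)) : (1 - g') g'^k *)
Definition geomp (B b : nat) (k : nat) : R :=
  (1 - B%:R / (B + b)%:R) * (B%:R / (B + b)%:R) ^+ k.

(* Expectation over the randomness of the epoch (I_j uniform of size B,
   N_j ~ Geom(B/(B+b)), inner minibatches i.i.d. uniform of size b, all
   independent), of a quantity F I N s. *)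
Definition Eepoch (B b : nat) (F : {set 'I_n} -> nat -> (nat -> {set 'I_n}) -> R) : R :=
  avg (subsets B) (fun I =>
    limn (series (fun k => geomp B b k * avg (batches b k) (fun s => F I k (ext_batches s))))).

(* The expectation is finite (absolute summability). *)
Definition Eint (B b : nat) (F : {set 'I_n} -> nat -> (nat -> {set 'I_n}) -> R) : Prop :=
  forall I, I \in subsets B ->
    cvgn (series (fun k => geomp B b k * avg (batches b k) (fun s => `|F I k (ext_batches s)|))).

End SVRG.

From HB Require Import structures.
From mathcomp Require Import all_boot all_order all_algebra.
From mathcomp Require Import all_classical all_reals all_analysis.
From mathcomp Require Import ring lra.
Set Implicit Arguments. Unset Strict Implicit. Unset Printing Implicit Defensive.
Import Order.TTheory GRing.Theory Num.Theory.
Import numFieldNormedType.Exports.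
Local Open Scope ring_scope.

(** Fix the outer minibatch I and write x_k for the inner iterates,
    a_k = grad f(x_k) and e = lam g_j - (1 - lam) grad f(x_0).
    - Smoothness gives the descent lemma f(x + h) <= f(x) + <grad f(x), h> + L/2 |h|^2
      (mean value theorem on a line) and |g_i x - g_i y|^2 <= L^2 |x - y|^2.
    - For a uniform b-subset S drawn without replacement, the minibatch mean of a
      family is unbiased and its second moment exceeds the squared full mean by at most
      (b n)^-1 sum_i |del_i|^2 (inclusion probabilities b/n and b(b-1)/(n(n-1))).
    - Hence one inner step decreases f in expectation by at least
      c |a_k|^2 + eta <e, a_k> - L eta^2 |e|^2 - ka |x_k - x_0|^2, with the constants
      c, ka of the statement.
    - Averaging over the i.i.d. inner batches and weighting step k by P(N = k), a
      telescoping argument for the geometric law gives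
      B E[gain_N] <= b E[f(x_0) - f(x_N)], which is the claim for fixed I; the theorem
      follows by averaging over I. *)

Section Euclidean.
Context {R : realType} {d : nat}.
Implicit Types (u v w : 'rV[R]_d).

Lemma dotvE u v : dotv u v = \sum_(j < d) u 0 j * v 0 j.
Proof. by rewrite /dotv !mxE; apply: eq_bigr => j _; rewrite mxE. Qed.

Lemma dotvC u v : dotv u v = dotv v u.
Proof. by rewrite !dotvE; apply: eq_bigr => j _; rewrite mulrC. Qed.

Lemma dotvDl u v w : dotv (u + v) w = dotv u w + dotv v w.
Proof. by rewrite !dotvE -big_split; apply: eq_bigr => j _; rewrite mxE mulrDl. Qed.

Lemma dotvZl (a : R) u v : dotv (a *: u) v = a * dotv u v.
Proof. by rewrite !dotvE mulr_sumr; apply: eq_bigr => j _; rewrite mxE mulrA. Qed.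

Lemma dotv0l v : dotv 0 v = 0.
Proof. by rewrite -(scale0r 0) dotvZl mul0r. Qed.

Lemma dotvBl u v w : dotv (u - v) w = dotv u w - dotv v w.
Proof. by rewrite dotvDl -scaleN1r dotvZl mulN1r. Qed.

Lemma dotvDr u v w : dotv u (v + w) = dotv u v + dotv u w.
Proof. by rewrite dotvC dotvDl !(dotvC u). Qed.

Lemma dotvZr (a : R) u v : dotv u (a *: v) = a * dotv u v.
Proof. by rewrite dotvC dotvZl dotvC. Qed.

Lemma dotvBr u v w : dotv u (v - w) = dotv u v - dotv u w.
Proof. by rewrite dotvC dotvBl !(dotvC u). Qed.

Lemma dotv0r v : dotv v 0 = 0.
Proof. by rewrite dotvC dotv0l. Qed.

Lemma dotv_suml (I : finType) (P : pred I) (F : I -> 'rV[R]_d) v :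
  dotv (\sum_(i | P i) F i) v = \sum_(i | P i) dotv (F i) v.
Proof. exact: (big_morph (fun u => dotv u v) (fun a b => dotvDl a b v) (dotv0l v)). Qed.

Lemma dotv_sumr (I : finType) (P : pred I) (F : I -> 'rV[R]_d) v :
  dotv v (\sum_(i | P i) F i) = \sum_(i | P i) dotv v (F i).
Proof. by rewrite dotvC dotv_suml; apply: eq_bigr => i _; rewrite dotvC. Qed.

Lemma enorm2_ge0 u : 0 <= enorm2 u.
Proof. by rewrite /enorm2 dotvE sumr_ge0 // => j _; rewrite -expr2 sqr_ge0. Qed.

Lemma enorm2_eq0 u : enorm2 u = 0 -> u = 0.
Proof.
rewrite /enorm2 dotvE => /eqP; rewrite psumr_eq0 => [/allP uj0|j _]; last first.
  by rewrite -expr2 sqr_ge0.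
apply/rowP => j; rewrite mxE; apply/eqP.
by have := uj0 j (mem_index_enum j); rewrite /= mulf_eq0 orbb.
Qed.

Lemma enorm2D u v : enorm2 (u + v) = enorm2 u + 2 * dotv u v + enorm2 v.
Proof. rewrite /enorm2 !dotvDl !dotvDr (dotvC v u); ring. Qed.

Lemma enorm2B u v : enorm2 (u - v) = enorm2 u - 2 * dotv u v + enorm2 v.
Proof. rewrite /enorm2 !dotvBl !dotvBr (dotvC v u); ring. Qed.

Lemma enorm2Z (a : R) u : enorm2 (a *: u) = a ^+ 2 * enorm2 u.
Proof. by rewrite /enorm2 dotvZl dotvZr mulrA expr2. Qed.

Lemma enorm2D_le u v : enorm2 (u + v) <= 2 * enorm2 u + 2 * enorm2 v.
Proof. rewrite enorm2D; have := enorm2_ge0 (u - v); rewrite enorm2B; lra. Qed.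

End Euclidean.

(** * Consequences of L-smoothness for the components f_i. *)
Section Smoothness.
Context {R : realType} {n d : nat}.
Variables (f : 'I_n -> 'rV[R]_d -> R) (g : 'I_n -> 'rV[R]_d -> 'rV[R]_d) (L : R).
Hypothesis grad_fg : is_gradient f g.
Hypothesis smooth : Lsmooth g L.

Lemma gradfE y : gradf g y = n%:R^-1 *: \sum_i g i y.
Proof.
rewrite /gradf /gradI cardsT card_ord; congr (_ *: _).
by apply: eq_bigl => i; rewrite finset.in_setT.
Qed.

Lemma smooth_sq i x y : enorm2 (g i x - g i y) <= L ^+ 2 * enorm2 (x - y).
Proof.
have := smooth i x y; rewrite /enorm.
have := sqr_sqrtr (enorm2_ge0 (g i x - g i y)); have := sqr_sqrtr (enorm2_ge0 (x - y)).
have := sqrtr_ge0 (enorm2 (g i x - g i y)); have := sqrtr_ge0 (enorm2 (x - y)).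
rewrite /enorm2; set a := dotv _ _; set c := dotv _ _.
move: (Num.sqrt a) (Num.sqrt c) => p q q0 p0 <- <- pq; nra.
Qed.

Lemma smooth_neg_trivial (i : 'I_n) (u : 'rV[R]_d) : L < 0 -> enorm2 u = 0.
Proof.
move=> L_lt0; have := smooth i u 0; rewrite subr0 /enorm => h.
have := sqrtr_ge0 (enorm2 (g i u - g i 0)); have := sqrtr_ge0 (enorm2 u).
rewrite /enorm2 => s0 s1.
have /eqP : Num.sqrt (dotv u u) = 0 by nra.
by rewrite sqrtr_eq0 => u0; apply/le_anti; rewrite u0 enorm2_ge0.
Qed.

Lemma smooth_dot i x y : dotv (g i x - g i y) (x - y) <= L * enorm2 (x - y).
Proof.
set a := g i x - g i y; set b := x - y.
have ab := smooth_sq i x y; rewrite -/a -/b in ab.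
case: (ltrgtP L 0) => [L_lt0|L_gt0|L0].
- by rewrite (enorm2_eq0 (smooth_neg_trivial i b L_lt0)) dotv0r /enorm2 dotv0r mulr0.
- have := enorm2_ge0 (a - L *: b); rewrite enorm2B dotvZr enorm2Z => h.
  have : L * dotv a b <= L * (L * enorm2 b) by nra.
  by rewrite ler_pM2l.
- have a0 : enorm2 a = 0.
    by apply/le_anti; rewrite enorm2_ge0 andbT; move: ab; rewrite L0 expr0n mul0r.
  by rewrite (enorm2_eq0 a0) dotv0l L0 mul0r.
Qed.

Lemma derive_on_line (i : 'I_n) (x h : 'rV[R]_d) (t : R) :
  is_derive t (1 : R) (fun s : R => f i (x + s *: h)) (dotv (g i (x + t *: h)) h).
Proof.
have [dif dfE] := grad_fg i (x + t *: h).
have f_der := @diff_derivable _ _ _ (f i) (x + t *: h) h dif.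
have quotE : (fun s : R => s^-1 *: (((fun s : R => f i (x + s *: h)) \o shift t) (s *: 1)
             - f i (x + t *: h))) =
         (fun s : R => s^-1 *: ((f i \o shift (x + t *: h)) (s *: h) - f i (x + t *: h))).
  apply: funext => s /=; congr (_ *: (f i _ - _)).
  by rewrite scalerDl [s%:A]mulr1 addrCA.
apply: DeriveDef; first by rewrite /derivable quotE; exact: f_der.
by rewrite /derive quotE -/(derive _ _ _) deriveE // dfE.
Qed.

(* Descent lemma: f_i(x + h) <= f_i(x) + <g_i x, h> + L/2 |h|^2.  Proof: the mean value
   theorem applied to psi(t) = f_i(x + t h) - t <g_i x, h> - t^2 L/2 |h|^2, whose
   derivative is nonpositive on (0, 1] by co-monotonicity. *)
Lemma descent (i : 'I_n) (x h : 'rV[R]_d) :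
  f i (x + h) <= f i x + dotv (g i x) h + L / 2 * enorm2 h.
Proof.
set K := dotv (g i x) h; set M := L / 2 * enorm2 h.
pose psi := (fun s : R => f i (x + s *: h)) - (K \*: id) - (M \*: (id ^+ 2)).
pose dpsi := fun t : R => dotv (g i (x + t *: h)) h - K *: (1:R) - M *: ((2%:R * t ^+ 1) *: (1:R)).
have psi' t : is_derive t (1:R) psi (dpsi t).
  exact: (is_deriveB (is_deriveB (derive_on_line i x h t)
    (is_deriveZ K (is_derive_id t (1:R)))) (is_deriveZ M (is_deriveX 2 (is_derive_id t (1:R))))).
have psi_cont : {within `[0%R, 1%R], continuous psi}%classic.
  by apply: derivable_within_continuous => t _; case: (psi' t).
have [c c01 psiE] := MVT ltr01 (fun t _ => psi' t) psi_cont.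
have c_gt0 : 0 < c by move: c01; rewrite in_itv /= => /andP[].
have dpsi_le0 : dpsi c <= 0.
  have := smooth_dot i (x + c *: h) x.
  rewrite addrAC subrr add0r dotvZr enorm2Z /dpsi dotvBl /K /M.
  rewrite /GRing.scale /= !mulr1 expr1; nra.
have psiE' t : psi t = f i (x + t *: h) - K * t - M * (t * t) by [].
move: psiE; rewrite subr0 mulr1 !psiE' scale1r scale0r addr0 !mulr1 !mulr0 !subr0 => psiE.
have : f i (x + h) - K - M - f i x <= 0 by rewrite psiE.
lra.
Qed.

Lemma favg_descent (y h : 'rV[R]_d) : (0 < n)%N ->
  favg f (y + h) <= favg f y + dotv (gradf g y) h + L / 2 * enorm2 h.
Proof.
move=> n_gt0; have n0 : (n%:R : R) != 0 by rewrite pnatr_eq0 -lt0n.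
rewrite /favg gradfE dotvZl dotv_suml.
have -> : L / 2 * enorm2 h = n%:R^-1 * \sum_(i < n) (L / 2 * enorm2 h).
  by rewrite sumr_const card_ord mulrnAr -mulrnAl -[n%:R^-1 *+ n]mulr_natr mulVf ?mul1r.
rewrite -!mulrDr ler_wpM2l ?invr_ge0 ?ler0n // -!big_split /=.
by apply: ler_sum => i _; apply: descent.
Qed.

End Smoothness.

Section Average.
Context {R : realType} {T : finType}.
Implicit Types (A : {set T}) (F G : T -> R).

Lemma avgD A F G : avg A (fun x => F x + G x) = avg A F + avg A G.
Proof. by rewrite /avg big_split mulrDr. Qed.

Lemma avgZ A (c : R) F : avg A (fun x => c * F x) = c * avg A F.
Proof. by rewrite /avg -mulr_sumr mulrCA. Qed.

Lemma avgB A F G : avg A (fun x => F x - G x) = avg A F - avg A G.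
Proof. by rewrite avgD /avg sumrN mulrN. Qed.

Lemma avg_lincomb A (F0 F1 F2 F3 F4 : T -> R) (a1 a2 a3 a4 : R) :
  avg A (fun x => F0 x - a1 * F1 x - a2 * F2 x + a3 * F3 x + a4 * F4 x) =
  avg A F0 - a1 * avg A F1 - a2 * avg A F2 + a3 * avg A F3 + a4 * avg A F4.
Proof. by rewrite avgD avgD avgB avgB !avgZ. Qed.

Lemma avg_cst A (c : R) : (0 < #|A|)%N -> avg A (fun _ => c) = c.
Proof.
move=> A_gt0; rewrite /avg sumr_const -[c *+ _]mulr_natl mulKf //.
by rewrite pnatr_eq0 -lt0n.
Qed.

Lemma avg_sum (I : finType) A (F : I -> T -> R) :
  avg A (fun x => \sum_i F i x) = \sum_i avg A (F i).
Proof. by rewrite /avg exchange_big mulr_sumr. Qed.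

Lemma eq_avg A F G : {in A, F =1 G} -> avg A F = avg A G.
Proof. by move=> FG; rewrite /avg; congr (_ * _); apply: eq_bigr. Qed.

Lemma ler_avg A F G : {in A, forall x, F x <= G x} -> avg A F <= avg A G.
Proof. by move=> FG; rewrite /avg ler_wpM2l ?invr_ge0 ?ler0n //; apply: ler_sum. Qed.

Lemma ler_avg_norm A F : `|avg A F| <= avg A (fun x => `|F x|).
Proof.
rewrite /avg normrM ger0_norm ?invr_ge0 ?ler0n // ler_wpM2l ?invr_ge0 ?ler0n //.
exact: ler_norm_sum.
Qed.

Lemma avg_indicator A (P : pred T) :
  avg A (fun x => (P x)%:R) = #|[set x in A | P x]|%:R / #|A|%:R :> R.
Proof.
rewrite /avg mulrC; congr (_ * _); rewrite -sum1_card natr_sum big_mkcond [RHS]big_mkcond.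
by apply: eq_bigr => x _; rewrite inE; case: (x \in A); case: (P x).
Qed.

End Average.

(** * Sampling a uniform b-subset of {1, ..., n} without replacement. *)

Lemma card_supsets (T : finType) (P : {set T}) k : (#|P| <= k)%N ->
  #|[set S : {set T} | P \subset S & #|S| == k]| = 'C(#|T| - #|P|, k - #|P|).
Proof.
move=> Pk; have -> : (#|T| - #|P| = #|~: P|)%N by rewrite -(cardsC P) addKn.
rewrite -cards_draws -[RHS](@card_in_imset _ _ (fun A => A :|: P)); last first.
  move=> A1 A2; rewrite !inE => /andP[/fintype.subsetP A1P _] /andP[/fintype.subsetP A2P _].
  move=> eqU.
  apply/setP => x; have := congr1 (fun X : {set T} => x \in X) eqU; rewrite /= !inE.
  case xP: (x \in P); last by rewrite !orbF.
  have := A1P x; have := A2P x; rewrite !inE xP /= => x2 x1 _.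
  by apply/idP/idP => [/x1|/x2].
apply: eq_card => S; rewrite !inE; apply/andP/imsetP => [[PS /eqP cardS]|[A]].
- exists (S :\: P); last first.
    apply/setP => x; rewrite !inE; case xP: (x \in P); rewrite ?orbT ?orbF //=.
    by move/fintype.subsetP: PS => /(_ x); rewrite xP => ->.
  rewrite inE cardsD (finset.setIidPr PS) cardS eqxx andbT.
  by apply/fintype.subsetP => x; rewrite !inE => /andP[].
- rewrite inE => /andP[AP /eqP cardA] ->; split; first exact: finset.subsetUr.
  rewrite cardsU cardA.
  have -> : A :&: P = finset.set0.
    apply/setP => x; rewrite !inE; move/fintype.subsetP: AP => /(_ x); rewrite !inE.
    by case: (x \in A) => //; case: (x \in P) => // /(_ isT).
  by rewrite cards0 subn0 subnK.
Qed.

Section Sampling.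
Context {R : realType} {n : nat} (b : nat).
Hypotheses (b_gt0 : (0 < b)%N) (b_le_n : (b <= n)%N).
Local Notation Sb := (subsets n b).

Lemma card_subsets : #|Sb| = 'C(n, b).
Proof. by rewrite /subsets card_draws card_ord. Qed.

Lemma card_subsets_gt0 : (0 < #|Sb|)%N.
Proof. by rewrite card_subsets bin_gt0. Qed.

Lemma sampling_n_gt0 : (0 < n)%N.
Proof. exact: leq_trans b_gt0 b_le_n. Qed.

Lemma avg_count (P : pred {set 'I_n}) (m k : nat) : (0 < m)%N ->
  (m * #|[set S in Sb | P S]| = k * 'C(n, b))%N ->
  avg Sb (fun S => (P S)%:R) = k%:R / m%:R :> R.
Proof.
move=> m_gt0 /(congr1 (fun l => l%:R : R)); rewrite !natrM => countE.
rewrite avg_indicator card_subsets; apply/eqP.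
rewrite eqr_div ?pnatr_eq0 -?lt0n ?bin_gt0 //.
by rewrite mulrC countE.
Qed.

Lemma avg_mem1 i : avg Sb (fun S => (i \in S)%:R) = b%:R / n%:R :> R.
Proof.
apply: avg_count; first exact: sampling_n_gt0.
have -> : [set S : {set 'I_n} in Sb | i \in S] =
          [set S : {set 'I_n} | [set i] \subset S & #|S| == b].
  by apply/setP => S; rewrite !inE finset.sub1set andbC.
rewrite card_supsets cards1 ?card_ord //.
by case: b b_gt0 => // b' _; rewrite !subn1 mul_bin_diag.
Qed.

(* Probability that two given distinct indices are both drawn. *)
Definition incl2 : R := b%:R * (b%:R - 1) / (n%:R * (n%:R - 1)).

Lemma avg_mem2 i j : i != j -> avg Sb (fun S => ((i \in S) && (j \in S))%:R) = incl2.
Proof.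
move=> ij; have n_gt1 : (1 < n)%N.
  by case: n i j ij => [[]//|[|//]] i j; rewrite !ord1 eqxx.
have -> : incl2 = (b * (b - 1))%:R / (n * (n - 1))%:R.
  by rewrite /incl2 !natrM !natrB // ltnW.
apply: avg_count; first by rewrite muln_gt0 subn_gt0 n_gt1 ltnW.
have -> : [set S : {set 'I_n} in Sb | (i \in S) && (j \in S)] =
          [set S : {set 'I_n} | [set i; j] \subset S & #|S| == b].
  by apply/setP => S; rewrite !inE finset.subUset !finset.sub1set andbC.
have card_ij : #|[set i; j]| = 2 by rewrite cards2 ij.
case: b b_gt0 => // -[_|b' _].
  rewrite muln0 mul0n; apply/eqP; rewrite muln_eq0 cards_eq0; apply/orP; right.
  apply/eqP/setP => S; rewrite !inE; apply/negbTE/negP => /andP[sub /eqP cardS].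
  by have := subset_leq_card sub; rewrite card_ij cardS.
rewrite card_supsets card_ij ?card_ord // !subSS subn0 subn1.
have [m ->] : exists m, n = m.+2 by exists n.-2; rewrite -subn2 -addn2 subnK.
have h1 := mul_bin_diag m.+1 b'; have h2 := mul_bin_diag m.+2 b'.+1; rewrite /= in h1 h2.
by rewrite /= subSS !subn0 subn1 -mulnA h1 mulnCA h2 mulnCA mulnA.
Qed.

Lemma incl2_ge0 : 0 <= incl2.
Proof.
have b_ge1 : (1 : R) <= b%:R by rewrite ler1n.
have n_ge1 : (1 : R) <= n%:R by rewrite ler1n sampling_n_gt0.
by rewrite /incl2 divr_ge0 // mulr_ge0 ?ler0n ?subr_ge0.
Qed.

Lemma incl2_le : incl2 <= (b%:R / n%:R) ^+ 2.
Proof.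
case: (ltnP 1 n) => [n_gt1|n_le1]; last first.
  have n1 : n = 1%N by apply/eqP; rewrite eqn_leq n_le1 sampling_n_gt0.
  by rewrite /incl2 n1 subrr mulr0 invr0 mulr0 sqr_ge0.
have n_gt1' : (1 : R) < n%:R by rewrite ltr1n.
have bn : (b%:R : R) <= n%:R by rewrite ler_nat.
have b_gt0' : (0 : R) < b%:R by rewrite ltr0n.
rewrite /incl2 expr_div_n ler_pdivrMr ?mulr_gt0 ?subr_gt0 ?(lt_trans ltr01) //.
rewrite mulrAC ler_pdivlMr ?exprn_gt0 ?(lt_trans ltr01) //.
rewrite -subr_ge0; have -> : b%:R ^+ 2 * (n%:R * (n%:R - 1)) - b%:R * (b%:R - 1) * n%:R ^+ 2
  = b%:R * n%:R * (n%:R - b%:R) :> R by ring.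
by rewrite !mulr_ge0 ?ler0n ?subr_ge0.
Qed.

End Sampling.

(** * First and second moments of a minibatch mean. *)

Definition mean {R : realType} {n d : nat} (S : {set 'I_n}) (del : 'I_n -> 'rV[R]_d) :
  'rV[R]_d := #|S|%:R^-1 *: \sum_(i in S) del i.

Section Moments.
Context {R : realType} {n d : nat} (b : nat).
Hypotheses (b_gt0 : (0 < b)%N) (b_le_n : (b <= n)%N).
Local Notation Sb := (subsets n b).
Local Notation p2 := (@incl2 R n b).
Implicit Types (del : 'I_n -> 'rV[R]_d) (w : 'rV[R]_d).

Lemma mean_setT del : mean [set: 'I_n] del = n%:R^-1 *: \sum_i del i.
Proof.
rewrite /mean cardsT card_ord; congr (_ *: _).
by apply: eq_bigl => i; rewrite finset.in_setT.
Qed.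

Lemma mean_subsets S del : S \in Sb -> mean S del = b%:R^-1 *: \sum_i (i \in S)%:R *: del i.
Proof.
rewrite inE => /eqP cardS; rewrite /mean cardS big_mkcond /=; congr (_ *: _).
by apply: eq_bigr => i _; case: (i \in S); rewrite ?scale1r ?scale0r.
Qed.

Lemma avg_dot_mean del w :
  avg Sb (fun S => dotv (mean S del) w) = dotv (mean [set: 'I_n] del) w.
Proof.
rewrite (@eq_avg _ _ _ _
  (fun S : {set 'I_n} => b%:R^-1 * \sum_i dotv (del i) w * (i \in S)%:R)); last first.
  move=> S /mean_subsets ->; rewrite dotvZl dotv_suml; congr (_ * _).
  by apply: eq_bigr => i _; rewrite dotvZl mulrC.
rewrite avgZ avg_sum mean_setT dotvZl dotv_suml !mulr_sumr.
apply: eq_bigr => i _; rewrite avgZ (avg_mem1 b_gt0 b_le_n).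
have b0 : (b%:R : R) != 0 by rewrite pnatr_eq0 -lt0n.
by field; rewrite b0 pnatr_eq0 -lt0n (sampling_n_gt0 b_gt0 b_le_n).
Qed.

Lemma avg_pair i j : avg Sb (fun S => ((i \in S) && (j \in S))%:R) =
  p2 + (i == j)%:R * (b%:R / n%:R - p2).
Proof.
case: (eqVneq i j) => [<-|ij]; last by rewrite (avg_mem2 b_gt0) // mul0r addr0.
under eq_avg do rewrite andbb.
by rewrite (avg_mem1 b_gt0 b_le_n) mul1r addrC subrK.
Qed.

Lemma avg_enorm2_mean del :
  avg Sb (fun S => enorm2 (mean S del)) = b%:R^-2 *
    (p2 * enorm2 (\sum_i del i) + (b%:R / n%:R - p2) * \sum_i enorm2 (del i)).
Proof.
set M := fun i j => dotv (del i) (del j).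
rewrite (@eq_avg _ _ _ _ (fun S : {set 'I_n} =>
  b%:R^-2 * \sum_i \sum_j M i j * ((i \in S) && (j \in S))%:R)); last first.
  move=> S /mean_subsets ->; rewrite enorm2Z exprVn /enorm2 dotv_suml; congr (_ * _).
  apply: eq_bigr => i _; rewrite dotv_sumr; apply: eq_bigr => j _.
  rewrite dotvZl dotvZr /M.
  by case: (i \in S); case: (j \in S); rewrite /= ?mul1r ?mul0r ?mulr1 ?mulr0.
rewrite avgZ avg_sum; congr (_ * _).
under eq_bigr do rewrite avg_sum; under eq_bigr do under eq_bigr do rewrite avgZ avg_pair.
rewrite /enorm2 dotv_suml mulr_sumr mulr_sumr -big_split /=; apply: eq_bigr => i _.
rewrite dotv_sumr mulr_sumr
  (eq_bigr (fun j => p2 * M i j + (i == j)%:R * ((b%:R / n%:R - p2) * M i j))) => [|j _];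
  last by ring.
rewrite big_split /= -mulr_sumr; congr (_ + _).
rewrite (bigD1 i) //= eqxx mul1r [X in _ + X]big1 ?addr0 // => j /negbTE.
by rewrite eq_sym => ->; rewrite mul0r.
Qed.

Lemma avg_enorm2_mean_le del :
  avg Sb (fun S => enorm2 (mean S del)) <=
  enorm2 (mean [set: 'I_n] del) + (b%:R * n%:R)^-1 * \sum_i enorm2 (del i).
Proof.
have n_gt0 : (0 : R) < n%:R by rewrite ltr0n (sampling_n_gt0 b_gt0 b_le_n).
have b_gt0' : (0 : R) < b%:R by rewrite ltr0n.
have T0 := enorm2_ge0 (\sum_i del i).
have Sg0 : 0 <= \sum_i enorm2 (del i) by apply: sumr_ge0 => i _; exact: enorm2_ge0.
have p0 := incl2_ge0 (R:=R) b_gt0 b_le_n; have p_le := incl2_le (R:=R) b_gt0 b_le_n.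
have coefE : b%:R^-2 * (b%:R / n%:R) = (b%:R * n%:R)^-1 :> R.
  by field; rewrite !gt_eqF.
have coef_le : b%:R^-2 * p2 <= n%:R^-2.
  have -> : n%:R^-2 = b%:R^-2 * (b%:R / n%:R) ^+ 2 :> R by field; rewrite !gt_eqF.
  by rewrite ler_wpM2l ?invr_ge0 ?exprn_ge0 ?ler0n.
rewrite avg_enorm2_mean mean_setT enorm2Z exprVn.
have -> : b%:R^-2 * (p2 * enorm2 (\sum_i del i) + (b%:R / n%:R - p2) * \sum_i enorm2 (del i)) =
  b%:R^-2 * p2 * enorm2 (\sum_i del i) + (b%:R * n%:R)^-1 * \sum_i enorm2 (del i)
  - b%:R^-2 * (p2 * \sum_i enorm2 (del i)) by rewrite -coefE; ring.
have : b%:R^-2 * p2 * enorm2 (\sum_i del i) <= n%:R^-2 * enorm2 (\sum_i del i).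
  exact: ler_wpM2r.
have : 0 <= b%:R^-2 * (p2 * \sum_i enorm2 (del i)).
  by apply: mulr_ge0; [rewrite invr_ge0 exprn_ge0 // ler0n | exact: mulr_ge0].
lra.
Qed.

Lemma avg_enorm2_affine_mean (c : R) (u : 'rV[R]_d) del :
  avg Sb (fun S => enorm2 (c *: mean S del + u)) <=
  enorm2 (c *: mean [set: 'I_n] del + u) + c ^+ 2 / (b%:R * n%:R) * \sum_i enorm2 (del i).
Proof.
under eq_avg do rewrite enorm2D enorm2Z dotvZl.
rewrite avgD avgD avgZ avgZ avgZ avg_dot_mean avg_cst ?card_subsets_gt0 //.
rewrite enorm2D enorm2Z dotvZl.
have := ler_wpM2l (sqr_ge0 c) (avg_enorm2_mean_le del).
rewrite mulrDr mulrA; lra.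
Qed.

End Moments.

(** * One inner step of Algorithm 3 in expectation over its minibatch. *)

Definition vdir {R : realType} {n d : nat} (g : 'I_n -> 'rV[R]_d -> 'rV[R]_d) (lam : R)
    (x0 gI : 'rV[R]_d) (S : {set 'I_n}) (y : 'rV[R]_d) : 'rV[R]_d :=
  (1 - lam) *: (gradI g S y - gradI g S x0) + lam *: gI.

Section InnerStep.
Context {R : realType} {n d : nat}.
Variables (f : 'I_n -> 'rV[R]_d -> R) (g : 'I_n -> 'rV[R]_d -> 'rV[R]_d) (L : R).
Hypothesis grad_fg : is_gradient f g.
Hypothesis smooth : Lsmooth g L.
Variables (b : nat) (lam eta : R) (x0 gI : 'rV[R]_d).
Hypotheses (b_gt0 : (0 < b)%N) (b_le_n : (b <= n)%N).
Local Notation Sb := (subsets n b).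

Let e := lam *: gI - (1 - lam) *: gradf g x0.
Let del y := fun i => g i y - g i x0.

Lemma vdir_mean S y : vdir g lam x0 gI S y = (1 - lam) *: mean S (del y) + lam *: gI.
Proof. by rewrite /vdir /gradI /mean sumrB [in RHS]scalerBr. Qed.

Lemma mean_vdir y :
  (1 - lam) *: mean [set: 'I_n] (del y) + lam *: gI = (1 - lam) *: gradf g y + e.
Proof.
rewrite /e mean_setT !gradfE /del sumrB scalerBr.
by apply/rowP => j; rewrite !mxE; ring.
Qed.

Lemma avg_dot_vdir y :
  avg Sb (fun S => dotv (gradf g y) (vdir g lam x0 gI S y)) =
  (1 - lam) * enorm2 (gradf g y) + dotv e (gradf g y).
Proof.
under eq_avg do rewrite vdir_mean dotvC dotvDl (dotvZl (1 - lam)) (dotvZl lam).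
rewrite avgD !avgZ avg_dot_mean // avg_cst ?card_subsets_gt0 //.
by rewrite -dotvZl -(dotvZl lam) -dotvDl mean_vdir dotvDl dotvZl.
Qed.

Lemma sum_enorm2_del y : \sum_i enorm2 (del y i) <= n%:R * (L ^+ 2 * enorm2 (y - x0)).
Proof.
rewrite mulr_natl -[n in _ *+ n]card_ord -sumr_const.
by apply: ler_sum => i _; apply: smooth_sq.
Qed.

(* Second moment of the direction: squared mean plus the sampling variance,
   which smoothness bounds by (1 - lam)^2 L^2 |y - x0|^2 / b. *)
Lemma avg_enorm2_vdir y :
  avg Sb (fun S => enorm2 (vdir g lam x0 gI S y)) <=
  2 * (1 - lam) ^+ 2 * enorm2 (gradf g y) + 2 * enorm2 e
  + (1 - lam) ^+ 2 * L ^+ 2 / b%:R * enorm2 (y - x0).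
Proof.
under eq_avg do rewrite vdir_mean.
apply: le_trans (avg_enorm2_affine_mean b_gt0 b_le_n _ _ _) _.
rewrite mean_vdir.
have n_gt0 : (0 : R) < n%:R by rewrite ltr0n (sampling_n_gt0 b_gt0 b_le_n).
have b_gt0' : (0 : R) < b%:R by rewrite ltr0n.
have var_le : (1 - lam) ^+ 2 / (b%:R * n%:R) * \sum_i enorm2 (del y i) <=
    (1 - lam) ^+ 2 * L ^+ 2 / b%:R * enorm2 (y - x0).
  have -> : (1 - lam) ^+ 2 * L ^+ 2 / b%:R * enorm2 (y - x0) =
      (1 - lam) ^+ 2 / (b%:R * n%:R) * (n%:R * (L ^+ 2 * enorm2 (y - x0))).
    by field; rewrite !gt_eqF.
  by rewrite ler_wpM2l ?sum_enorm2_del // divr_ge0 ?sqr_ge0 // ltW ?mulr_gt0.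
have := enorm2D_le ((1 - lam) *: gradf g y) e; rewrite enorm2Z; lra.
Qed.

Lemma inner_step y :
  avg Sb (fun S => favg f (y - eta *: vdir g lam x0 gI S y)) <=
  favg f y - (1 - lam) * (1 - (1 - lam) * L * eta) * eta * enorm2 (gradf g y)
   - eta * dotv e (gradf g y) + L * eta ^+ 2 * enorm2 e
   + (1 - lam) ^+ 2 * eta ^+ 2 * L ^+ 3 / (2 * b%:R) * enorm2 (y - x0).
Proof.
have n_gt0 := sampling_n_gt0 b_gt0 b_le_n.
have descent_S S : favg f (y - eta *: vdir g lam x0 gI S y) <=
    favg f y - eta * dotv (gradf g y) (vdir g lam x0 gI S y)
    + L / 2 * eta ^+ 2 * enorm2 (vdir g lam x0 gI S y).
  have := favg_descent grad_fg smooth y (- (eta *: vdir g lam x0 gI S y)) n_gt0.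
  by rewrite -scaleNr dotvZr enorm2Z sqrrN mulNr mulrA.
apply: le_trans (ler_avg (fun S _ => descent_S S)) _.
rewrite avgD avgB avg_cst ?card_subsets_gt0 // !avgZ avg_dot_vdir.
case: (ltP L 0) => [L_lt0|L_ge0].
  have z u := smooth_neg_trivial smooth (Ordinal n_gt0) u L_lt0.
  have -> : avg Sb (fun S => enorm2 (vdir g lam x0 gI S y)) = 0.
    by rewrite (eq_avg (G := fun=> 0)) ?avg_cst ?card_subsets_gt0 // => S _; apply: z.
  rewrite !z; lra.
have := ler_wpM2l (mulr_ge0 (divr_ge0 L_ge0 (ler0n _ 2)) (sqr_ge0 eta)) (avg_enorm2_vdir y).
have -> : (1 - lam) ^+ 2 * eta ^+ 2 * L ^+ 3 / (2 * b%:R) =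
  L / 2 * eta ^+ 2 * ((1 - lam) ^+ 2 * L ^+ 2 / b%:R).
  by field; rewrite pnatr_eq0 -lt0n.
nra.
Qed.

End InnerStep.

Section Batches.
Context {n : nat} (b : nat).
Local Notation FF k := {ffun 'I_k -> {set 'I_n}}.

Definition restr k (s : FF k.+1) : FF k := [ffun j => s (widen_ord (leqnSn k) j)].
Definition join k (t : FF k) (S : {set 'I_n}) : FF k.+1 :=
  [ffun i : 'I_k.+1 => if @insub _ (fun m => (m < k)%N) 'I_k (val i) is Some j then t j else S].

Lemma restr_join k t S : restr (@join k t S) = t.
Proof.
apply/ffunP => j; rewrite !ffunE /=.
case: insubP => [j' _ ej|]; last by rewrite ltn_ord.
by congr (t _); apply: val_inj; rewrite ej.
Qed.

Lemma join_last k t S : @join k t S ord_max = S.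
Proof. by rewrite ffunE; case: insubP => //= j; rewrite ltnn. Qed.

Lemma join_restr k (s : FF k.+1) : join (restr s) (s ord_max) = s.
Proof.
apply/ffunP => i; rewrite !ffunE.
case: insubP => [j _ ej|]; first by rewrite ffunE; congr (s _); apply: val_inj; rewrite /= ej.
rewrite -leqNgt => k_le_i; congr (s _); apply: val_inj => /=.
by apply/eqP; rewrite eqn_leq k_le_i -ltnS ltn_ord.
Qed.

Lemma ext_restr k (s : FF k.+1) m : (m < k)%N -> ext_batches s m = ext_batches (restr s) m.
Proof.
move=> mk; rewrite /ext_batches.
case: insubP => [i _ ei|]; last by rewrite ltnS ltnW.
case: insubP => [j _ ej|]; last by rewrite mk.
by rewrite ffunE; congr (s _); apply: val_inj; rewrite /= ei ej.
Qed.

Lemma ext_last k (s : FF k.+1) : ext_batches s k = s ord_max.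
Proof.
rewrite /ext_batches; case: insubP => [i _ ei|]; last by rewrite ltnSn.
by congr (s _); apply: val_inj; rewrite /= ei.
Qed.

Lemma join_in k t S :
  (@join k t S \in batches n b k.+1) = (t \in batches n b k) && (S \in subsets n b).
Proof.
rewrite !inE; apply/forallP/andP => [tS_b|[/forallP t_b S_b] i].
  split; last by have := tS_b ord_max; rewrite join_last.
  apply/forallP => j; have := tS_b (widen_ord (leqnSn k) j).
  suff -> : t j = join t S (widen_ord (leqnSn k) j) by [].
  by rewrite -{1}(restr_join t S) ffunE.
rewrite -(restr_join t S) in t_b; rewrite -(join_restr (join t S)) ffunE.
case: insubP => [j _ _|_]; first by have := t_b j; rewrite !ffunE.
by rewrite join_last.
Qed.

Lemma sum_batchesS (V : nmodType) k (F : FF k.+1 -> V) :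
  \sum_(s in batches n b k.+1) F s =
  \sum_(t in batches n b k) \sum_(S in subsets n b) F (join t S).
Proof.
rewrite pair_big_dep /= (reindex (fun p : FF k * {set 'I_n} => join p.1 p.2)) /=; last first.
  exists (fun s => (restr s, s ord_max)) => [[t S] _|s _] /=.
    by rewrite restr_join join_last.
  by rewrite join_restr.
by apply: eq_bigl => -[t S]; rewrite join_in.
Qed.

Lemma card_batches k : #|batches n b k| = (#|subsets n b| ^ k)%N.
Proof.
elim: k => [|k IH].
  rewrite expn0; apply/eqP/cards1P; exists [ffun i : 'I_0 => finset.set0].
  apply/setP => s; rewrite !inE; apply/idP/idP => _; last by apply/forallP => -[].
  by apply/eqP/ffunP => -[].
rewrite -sum1_card (@sum_batchesS nat) /=.
under eq_bigr do rewrite sum1_card.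
by rewrite sum_nat_const expnS mulnC IH.
Qed.

Lemma avg_batchesS {R : realType} k (F : FF k.+1 -> R) :
  avg (batches n b k.+1) F =
  avg (batches n b k) (fun t => avg (subsets n b) (fun S => F (join t S))).
Proof.
rewrite /avg sum_batchesS card_batches expnS natrM invfM -card_batches.
by rewrite -[in RHS]mulr_sumr mulrA [_^-1 * _]mulrC.
Qed.

End Batches.

Lemma svrg_iter_ext {R : realType} {n d : nat} (g : 'I_n -> 'rV[R]_d -> 'rV[R]_d)
    lam eta x0 gI (s s' : nat -> {set 'I_n}) k :
  (forall m, (m < k)%N -> s m = s' m) ->
  svrg_iter g lam eta x0 gI s k = svrg_iter g lam eta x0 gI s' k.
Proof.
elim: k => [//|k IH] ss' /=.
by rewrite IH ?ss' // => m mk; apply: ss'; exact: ltnW.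
Qed.

Lemma svrg_iter_join {R : realType} {n d : nat} (g : 'I_n -> 'rV[R]_d -> 'rV[R]_d)
    lam eta x0 gI k (t : {ffun 'I_k -> {set 'I_n}}) (S : {set 'I_n}) :
  svrg_iter g lam eta x0 gI (ext_batches (join t S)) k.+1 =
  svrg_iter g lam eta x0 gI (ext_batches t) k
  - eta *: vdir g lam x0 gI S (svrg_iter g lam eta x0 gI (ext_batches t) k).
Proof.
rewrite /= ext_last join_last.
suff -> : svrg_iter g lam eta x0 gI (ext_batches (join t S)) k =
          svrg_iter g lam eta x0 gI (ext_batches t) k by [].
by apply: svrg_iter_ext => m mk; rewrite ext_restr // restr_join.
Qed.

(** * Series weighted by a geometric distribution. *)
Section GeometricSeries.
Context {R : realType}.
Implicit Types u v : nat -> R.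

Lemma series_dominated u v : (forall k, `|u k| <= v k) -> cvgn (series v) -> cvgn (series u).
Proof.
move=> uv cv; apply: normed_cvg.
by apply: (@series_le_cvg _ _ v) => // k; [exact: normr_ge0 | exact: le_trans (uv k)].
Qed.

Lemma series_shift u : cvgn (series u) ->
  cvgn (series (fun k => u k.+1)) /\
  limn (series (fun k => u k.+1)) = limn (series u) - u 0%N.
Proof.
move=> cu.
have -> : series (fun k => u k.+1) = (fun m => series u m.+1 - u 0%N).
  apply: funext => m; rewrite /series /= big_nat_recl // addrC addKr.
  by apply: eq_bigr.
have lim_shift : ((fun m => series u m.+1 - u 0%N) @ \oo --> limn (series u) - u 0%N)%classic.
  by apply: cvgB (cvg_cst _); rewrite (cvg_shiftS (series u)).
by split; [exact: (cvgP _ lim_shift) | exact: (cvg_lim _ lim_shift)].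
Qed.

(* For N ~ Geom(gam) this reads  gam E[u_N] <= (1 - gam) E[D_N]. *)
Lemma geometric_telescoping (gam : R) (p u D : nat -> R) :
  0 < gam -> (forall k, 0 <= p k) -> (forall k, p k.+1 = gam * p k) -> D 0%N = 0 ->
  (forall k, u k <= D k.+1 - D k) ->
  cvgn (series (fun k => p k * u k)) -> cvgn (series (fun k => p k * D k)) ->
  gam * limn (series (fun k => p k * u k)) <= (1 - gam) * limn (series (fun k => p k * D k)).
Proof.
move=> gam_gt0 p_ge0 pS D0 uD cu cD; set PD := fun k => p k * D k.
have [cD1 lD1] := series_shift cD.
have cR : cvgn (series (gam^-1 *: (fun k => PD k.+1) - PD)).
  by apply: is_cvg_seriesB => //; apply: is_cvg_seriesZ.
have step k : p k * u k <= (gam^-1 *: (fun k => PD k.+1) - PD) k.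
  have -> : (gam^-1 *: (fun k => PD k.+1) - PD) k = p k * (D k.+1 - D k).
    by rewrite /PD !fctE pS /GRing.scale /=; field; rewrite gt_eqF.
  exact: ler_wpM2l.
have cZ : cvgn (series (gam^-1 *: (fun k => PD k.+1))) by apply: is_cvg_seriesZ.
have := lim_series_le cu cR step.
rewrite lim_seriesB // lim_seriesZ // lD1 D0 mulr0 subr0.
set l := limn (series PD) => le_lim.
have -> : (1 - gam) * l = gam * (gam^-1 *: l - l).
  by rewrite /GRing.scale /=; field; rewrite gt_eqF.
by rewrite ler_pM2l.
Qed.

Lemma geomp_ge0 (B b k : nat) : 0 <= geomp R B b k.
Proof.
have gam_ge0 : (0 : R) <= B%:R / (B + b)%:R by rewrite divr_ge0 ?ler0n.
have gam_le1 : B%:R / (B + b)%:R <= 1 :> R.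
  case: (posnP (B + b)) => [->|Bb_gt0]; first by rewrite invr0 mulr0 ler01.
  by rewrite ler_pdivrMr ?ltr0n // mul1r ler_nat leq_addr.
by rewrite mulr_ge0 ?subr_ge0 // exprn_ge0.
Qed.

Lemma geomp_telescoping (B b : nat) u D : (0 < B)%N -> D 0%N = 0 ->
  (forall k, u k <= D k.+1 - D k) ->
  cvgn (series (fun k => geomp R B b k * u k)) ->
  cvgn (series (fun k => geomp R B b k * D k)) ->
  B%:R * limn (series (fun k => geomp R B b k * u k)) <=
  b%:R * limn (series (fun k => geomp R B b k * D k)).
Proof.
move=> B_gt0 D0 uD cu cD; set gam : R := B%:R / (B + b)%:R.
have Bb_gt0 : (0 : R) < (B + b)%:R by rewrite ltr0n addn_gt0 B_gt0.
have gam_gt0 : 0 < gam by rewrite divr_gt0 // ltr0n.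
have pS k : geomp R B b k.+1 = gam * geomp R B b k.
  by rewrite /geomp -/gam exprS; ring.
have := geometric_telescoping gam_gt0 (geomp_ge0 B b) pS D0 uD cu cD.
have -> : 1 - gam = b%:R / (B + b)%:R by rewrite /gam natrD; field; rewrite -natrD gt_eqF.
by rewrite /gam -!mulrA ![_^-1 * _]mulrC !mulrA ler_pM2r ?invr_gt0.
Qed.

End GeometricSeries.

Definition batch_avg {R : realType} {n : nat} (b : nat)
    (F : {set 'I_n} -> nat -> (nat -> {set 'I_n}) -> R) (I : {set 'I_n}) (k : nat) : R :=
  avg (batches n b k) (fun s => F I k (ext_batches s)).

Lemma batch_avg_cvg {R : realType} {n : nat} (B b : nat) F I :
  Eint B b F -> I \in subsets n B ->
  cvgn (series (fun k => geomp R B b k * batch_avg b F I k)).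
Proof.
move=> F_int I_B; apply: series_dominated (F_int I I_B) => k.
by rewrite normrM ger0_norm ?geomp_ge0 // ler_wpM2l ?geomp_ge0 // ler_avg_norm.
Qed.

Section Epoch.
Context {R : realType} {n d : nat}.
Variables (f : 'I_n -> 'rV[R]_d -> R) (g : 'I_n -> 'rV[R]_d -> 'rV[R]_d) (L : R).
Hypothesis grad_fg : is_gradient f g.
Hypothesis smooth : Lsmooth g L.
Variables (B b : nat) (lam eta : R) (x0 : 'rV[R]_d).
Hypotheses (B_gt0 : (0 < B)%N) (b_gt0 : (0 < b)%N) (b_le_n : (b <= n)%N).

Local Notation xt := (fun I N s => svrg_iter g lam eta x0 (gradI g I x0) s N).
Local Notation e := (fun I => lam *: gradI g I x0 - (1 - lam) *: gradf g x0).
Local Notation A := (fun I N s => enorm2 (gradf g (xt I N s))).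
Local Notation C := (fun I N s => dotv (e I) (gradf g (xt I N s))).
Local Notation D := (fun I N s => favg f x0 - favg f (xt I N s)).
Local Notation G := (fun I N s => enorm2 (xt I N s - x0)).
Local Notation H := (fun I (N : nat) (s : nat -> {set 'I_n}) => enorm2 (e I)).
Local Notation c := ((1 - lam) * (1 - (1 - lam) * L * eta) * eta).
Local Notation ka := ((1 - lam) ^+ 2 * eta ^+ 2 * L ^+ 3 / (2 * b%:R)).
Local Notation m := (batch_avg b).

Lemma epoch_step I k :
  c * m A I k + eta * m C I k - L * eta ^+ 2 * m H I k - ka * m G I k <= m D I k.+1 - m D I k.
Proof.
have batches_gt0 k' : (0 < #|batches n b k'|)%N.
  by rewrite card_batches expn_gt0 (card_subsets_gt0 b_le_n).
set y := fun t : {ffun 'I_k -> {set 'I_n}} =>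
  svrg_iter g lam eta x0 (gradI g I x0) (ext_batches t) k.
have mD_succ : m D I k.+1 = favg f x0 - avg (batches n b k) (fun t => avg (subsets n b)
    (fun S => favg f (y t - eta *: vdir g lam x0 (gradI g I x0) S (y t)))).
  rewrite /batch_avg avgB avg_cst // avg_batchesS; congr (_ - _).
  by apply: eq_avg => t _; apply: eq_avg => S _; rewrite svrg_iter_join.
have := ler_avg (fun t (_ : t \in batches n b k) =>
  inner_step grad_fg smooth lam eta x0 (gradI g I x0) b_gt0 b_le_n (y t)).
rewrite mD_succ /batch_avg avgB avg_lincomb !avg_cst //.
lra.
Qed.

Local Notation S F I := (limn (series (fun k => geomp R B b k * m F I k))).

Lemma epoch_bound I : I \in subsets n B ->
  Eint B b A -> Eint B b C -> Eint B b D -> Eint B b G -> Eint B b H ->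
  c * B%:R * S A I + eta * B%:R * S C I <=
  b%:R * S D I + ka * B%:R * S G I + L * eta ^+ 2 * B%:R * S H I.
Proof.
move=> I_B hA hC hD hG hH.
set w := fun F => (fun k => geomp R B b k * m F I k).
have cw F : Eint B b F -> cvgn (series (w F)) by move=> hF; exact: batch_avg_cvg.
have cZ F a : Eint B b F -> cvgn (series (a *: w F)).
  by move=> hF; apply: is_cvg_seriesZ; apply: cw.
have cA := cZ _ c hA; have cC := cZ _ eta hC.
have cH := cZ _ (L * eta ^+ 2) hH; have cG := cZ _ ka hG.
have cAC := is_cvg_seriesD cA cC; have cACH := is_cvg_seriesB cAC cH.
pose gain k := c * m A I k + eta * m C I k - L * eta ^+ 2 * m H I k - ka * m G I k.
have gainE : (fun k => geomp R B b k * gain k) =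
    c *: w A + eta *: w C - (L * eta ^+ 2) *: w H - ka *: w G.
  transitivity (fun k => c * w A k + eta * w C k - L * eta ^+ 2 * w H k - ka * w G k).
    by apply: funext => k; rewrite /gain /w /=; ring.
  by apply: funext => k; rewrite !fctE /GRing.scale /=; ring.
have c_gain : cvgn (series (fun k => geomp R B b k * gain k)).
  by rewrite gainE; exact: is_cvg_seriesB cACH cG.
have lim_gain : limn (series (fun k => geomp R B b k * gain k)) =
    c * S A I + eta * S C I - L * eta ^+ 2 * S H I - ka * S G I.
  rewrite gainE (lim_seriesB cACH cG) (lim_seriesB cAC cH) (lim_seriesD cA cC).
  by rewrite (lim_seriesZ c (cw _ hA)) (lim_seriesZ eta (cw _ hC))
    (lim_seriesZ (L * eta ^+ 2) (cw _ hH)) (lim_seriesZ ka (cw _ hG)).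
have mD0 : m D I 0%N = 0.
  rewrite /batch_avg (eq_avg (G := fun=> 0)) ?avg_cst ?card_batches ?expn0 // => s _.
  by rewrite subrr.
have := @geomp_telescoping R B b gain (m D I) B_gt0 mD0 (epoch_step I) c_gain (cw _ hD).
rewrite lim_gain; lra.
Qed.

End Epoch.

(* Averaging the conditional bound over the uniform outer minibatch I_j. *)
Theorem lemmaB8 (R : realType) (n d : nat)
  (f : 'I_n -> 'rV[R]_d -> R) (g : 'I_n -> 'rV[R]_d -> 'rV[R]_d) (L : R)
  (B b : nat) (lam eta : R) (x0 : 'rV[R]_d) :
  is_gradient f g -> Lsmooth g L ->
  (0 < B <= n)%N -> (0 < b <= n)%N ->
  0 < lam < 1 -> 0 < eta -> eta * L < 1 ->
  let xt := fun I N s => svrg_iter g lam eta x0 (gradI g I x0) s N in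
  let e := fun I => lam *: gradI g I x0 - (1 - lam) *: gradf g x0 in
  let A := fun I N s => enorm2 (gradf g (xt I N s)) in
  let C := fun I N s => dotv (e I) (gradf g (xt I N s)) in
  let D := fun I N s => favg f x0 - favg f (xt I N s) in
  let G := fun I N s => enorm2 (xt I N s - x0) in
  let H := fun I (N : nat) (s : nat -> {set 'I_n}) => enorm2 (e I) in
  Eint B b A -> Eint B b C -> Eint B b D -> Eint B b G -> Eint B b H ->
  (1 - lam) * (1 - (1 - lam) * L * eta) * eta * B%:R * Eepoch B b A
    + eta * B%:R * Eepoch B b C
  <= b%:R * Eepoch B b D
     + (1 - lam) ^+ 2 * eta ^+ 2 * B%:R * L ^+ 3 / (2 * b%:R) * Eepoch B b G
     + L * eta ^+ 2 * B%:R * Eepoch B b H.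
Proof.
move=> grad_fg smooth /andP[B_gt0 _] /andP[b_gt0 b_le_n] _ _ _ xt e A C D G H hA hC hD hG hH.
have := ler_avg (fun I I_B =>
  epoch_bound grad_fg smooth B_gt0 b_gt0 b_le_n I_B hA hC hD hG hH).
rewrite !avgD !avgZ /Eepoch /batch_avg.
lra.
Qed.
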